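(* Let $b\ge 1$, let $L$ be a normalized Latin square of size $b$ over the alphabet $\mathcal A=\{a_1,\dots,a_b\}$, and let $M=\mathcal{E}(L)$ be its encoding matrix. Let $w$ be a word of length $m\ge 1$ over $\mathcal A$ and let $r\ge -1$ be an integer. (1) If $w$ is $r$-regular, then $L(w)$ is $(r+1)$-regular. (2) If $M$ is invertible (as a real matrix) and $L(w)$ is $(r+1)$-regular, then $w$ is $r$-regular. (3) If $M$ is not invertible, then there exist a positive integer $m'$ and a word $w'$ of length $m'$ over $\mathcal A$ such that $L(w')$ is $1$-regular but $w'$ is not $0$-regular.
   Context: Fix an alphabet $\mathcal A=\{a_1,\dots,a_b\}$ of $b$ letters, ordered $a_1<\dots<a_b$; identify $a_q$ with the integer $q$ when convenient. For a word $w=w_1\cdots w_m$ over $\mathcal A$ and an integer $r\ge -1$, $w$ is $r$-regular if for every $k=0,1,\dots,r$ the sum $\sum_{1\le t\le m,\ w_t=x} t^k$ is the same for all letters $x\in\mathcal A$ (a letter not occurring in $w$ contributes the empty sum $0$); every word is $(-1)$-regular. A Latin square of size $b$ over $\mathcal A$ is a $b\times b$ matrix with entries in $\mathcal A$ in which each letter occurs exactly once in each row and each column; it is normalized if its first column is $(a_1,\dots,a_b)^T$, i.e. $L_{q,1}=a_q$. For $k=1,\dots,b$ let $\pi_k$ be the permutation of $\mathcal A$ given by $\pi_k(a_q)=L_{q,k}$ (so $\pi_1=\mathrm{id}$ when $L$ is normalized). For a permutation $\pi$ of $\mathcal A$, $\pi(w_1\cdots w_m)=\pi(w_1)\cdots\pi(w_m)$,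 and $L(w)$ is the concatenation $w\,\pi_2(w)\,\pi_3(w)\cdots\pi_b(w)$, a word of length $bm$. The encoding matrix $M=\mathcal E(L)$ is the $b\times b$ integer matrix defined by $M_{ij}=x$ if and only if $L_{j,x}=a_i$, i.e. $M_{ij}$ is the index of the column in which the letter $a_i$ occurs in row $j$ of $L$. *)

From HB Require Import structures.
From mathcomp Require Import all_boot all_order all_algebra.
Set Implicit Arguments. Unset Strict Implicit. Unset Printing Implicit Defensive.
Import Order.TTheory GRing.Theory Num.Theory.

(* Alphabet A = {a_1,...,a_b} is represented by 'I_b, with a_q <-> ordinal q-1.
   Words are sequences over 'I_b; positions are 1-indexed. *)

Definition psum (b : nat) (k : nat) (x : 'I_b) (w : seq 'I_b) : nat :=
  \sum_(p <- zip (iota 1 (size w)) w | p.2 == x) p.1 ^ k.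

(* w is r-regular (r : int, r >= -1); every word is (-1)-regular *)
Definition regular (b : nat) (r : int) (w : seq 'I_b) : Prop :=
  forall k : nat, (k%:Z <= r)%R -> forall x y : 'I_b, psum k x w = psum k y w.

Definition latin (b : nat) (L : 'M['I_b]_b) : Prop :=
  (forall i x : 'I_b, #|[set j | L i j == x]| = 1) /\
  (forall j x : 'I_b, #|[set i | L i j == x]| = 1).

Definition normalized (b : nat) (L : 'M['I_b]_b) : Prop :=
  forall q c : 'I_b, val c = 0%N -> L q c = q.

(* pi_k(a_q) = L_{q,k}; L(w) = w pi_2(w) ... pi_b(w) *)
Definition Lword (b : nat) (L : 'M['I_b]_b) (w : seq 'I_b) : seq 'I_b :=
  flatten [seq [seq L x k | x <- w] | k <- enum 'I_b].

(* encoding matrix: M_{ij} = x iff L_{j,x} = a_i (x the 1-indexed column) *)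
Definition encoding (b : nat) (L : 'M['I_b]_b) : 'M[rat]_b :=
  \matrix_(i < b, j < b)
    match [pick c : 'I_b | L j c == i] with
    | Some c => ((val c).+1)%:R%R
    | None => 0%R
    end.

From HB Require Import structures.
From mathcomp Require Import all_boot all_order all_algebra.
From mathcomp Require Import ring zify.
Import Order.TTheory GRing.Theory Num.Theory.
Set Implicit Arguments. Unset Strict Implicit.

(* Write p_k(x, w) for the k-th
   power sum of the positions of the letter x in w, and pi_c for column c of L.
   The word L(w) is the concatenation of the blocks pi_c(w), block c being w
   shifted by c m (m = |w|), so a binomial expansion gives
     p_j(y, L(w)) = sum_c sum_(i <= j) C(j,i) (c m)^(j-i) p_i(pi_c^-1 y, w).
   The term i = j is sum_x p_j(x, w), independent of y; if w is balanced in
   all orders i < k the terms i < k are independent of y as well, and the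
   term i = k of order k+1 is (k+1) m times the column weight
   sum_c c p_k(pi_c^-1 y, w), which differs from (M v)_y, v = (p_k(x, w))_x,
   by the constant sum_x p_k(x, w).  Hence:
   (1) regularity of w up to r gives regularity of L(w) up to r+1;
   (2) if M is invertible, M v constant forces v constant, because M has the
       nonzero constant row sums 1 + ... + b; induction on the order gives (2);
   (3) if M is singular, a rational kernel vector, scaled and shifted to
       positive integers n, is realized as the letter counts of a word w'. *)

Section PowerSums.
Variable T : eqType.

Definition ps (s k : nat) (x : T) (w : seq T) : nat :=
  \sum_(p <- zip (iota s (size w)) w | p.2 == x) p.1 ^ k.

Lemma ps_nil s k x : ps s k x [::] = 0.
Proof. by rewrite /ps big_nil. Qed.

Lemma ps_cons s k x z w : ps s k x (z :: w) = (z == x) * s ^ k + ps s.+1 k x w.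
Proof. by rewrite /ps big_cons /=; case: (z == x); rewrite ?mul1n ?mul0n. Qed.

Lemma ps_cat s k x u v : ps s k x (u ++ v) = ps s k x u + ps (s + size u) k x v.
Proof.
elim: u s => [|z u IH] s /=; first by rewrite ps_nil addn0.
by rewrite !ps_cons IH addnA addSnnS.
Qed.

Lemma ps_shift s d j x w :
  ps (s + d) j x w = \sum_(i < j.+1) 'C(j, i) * d ^ (j - i) * ps s i x w.
Proof.
elim: w s => [|z w IH] s.
  by rewrite ps_nil big1 // => i _; rewrite ps_nil muln0.
rewrite ps_cons -addSn IH.
under [in RHS]eq_bigr => i _ do rewrite ps_cons mulnDr.
rewrite big_split /=; congr (_ + _).
by rewrite addnC expnDn big_distrr /=; apply: eq_bigr => i _; ring.
Qed.

Lemma ps_flatten s k x m (g : seq (seq T)) :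
  {in g, forall u, size u = m} ->
  ps s k x (flatten g) = \sum_(0 <= i < size g) ps (s + i * m) k x (nth [::] g i).
Proof.
elim: g s => [|u g IH] s Hg /=; first by rewrite big_nil ps_nil.
rewrite ps_cat IH; last by move=> v Hv; apply: Hg; rewrite inE Hv orbT.
rewrite big_nat_recl // mul0n addn0 Hg ?mem_head //; congr (_ + _).
by apply: eq_bigr => i _; rewrite mulSn addnA.
Qed.

Lemma ps0_count s x w : ps s 0 x w = count_mem x w.
Proof.
elim: w s => [|z w IH] s; first by rewrite ps_nil.
by rewrite ps_cons IH expn0 muln1.
Qed.

End PowerSums.

Lemma ps_map_preim (T T' : eqType) (f : T -> T') s k x y w :
  (forall z, (f z == y) = (z == x)) -> ps s k y (map f w) = ps s k x w.
Proof.
move=> Hf; elim: w s => [|z w IH] s /=; first by rewrite !ps_nil.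
by rewrite !ps_cons Hf IH.
Qed.

Definition word_of_counts (T : finType) (n : T -> nat) : seq T :=
  flatten [seq nseq (n z) z | z <- enum T].

Lemma count_word_of_counts (T : finType) (n : T -> nat) x :
  count_mem x (word_of_counts n) = n x.
Proof.
rewrite count_flatten sumnE !big_map (bigD1 x) //= count_nseq /= eqxx mul1n.
by rewrite big1 ?addn0 // => z Hz; rewrite count_nseq /= (negbTE Hz).
Qed.

Lemma unique_pick (T : finType) (P : pred T) (d : T) :
  #|[set j | P j]| = 1 -> forall j, P j = (j == odflt d [pick j | P j]).
Proof.
move=> /eqP/cards1P[a Ha].
have Pa j : P j = (j == a) by rewrite -in_set1 -Ha inE.
case: pickP => [j|none]; first by rewrite Pa => /eqP -> i; rewrite Pa.
by have := none a; rewrite Pa eqxx.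
Qed.

Section LatinSquare.
Variables (b : nat) (L : 'M['I_b]_b).
Hypothesis HL : latin L.

(* row_of c y: the row in which column c of L contains y (so pi_c^-1 (y));
   col_of x y: the column in which row x of L contains y. *)
Definition row_of (c y : 'I_b) : 'I_b := odflt y [pick x | L x c == y].
Definition col_of (x y : 'I_b) : 'I_b := odflt y [pick c | L x c == y].

Lemma row_ofE c y x : (L x c == y) = (x == row_of c y).
Proof. exact: (unique_pick y (HL.2 c y)). Qed.

Lemma col_ofE x y c : (L x c == y) = (c == col_of x y).
Proof. exact: (unique_pick y (HL.1 x y)). Qed.

Lemma col_of_row_of c y : col_of (row_of c y) y = c.
Proof. by apply/esym/eqP; rewrite -col_ofE row_ofE. Qed.

(* For a fixed letter y, c |-> row_of c y is a bijection of 'I_b. *)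
Lemma sum_row_of (R : Type) (idx : R) (op : Monoid.com_law idx) y (F : 'I_b -> R) :
  \big[op/idx]_(c < b) F (row_of c y) = \big[op/idx]_x F x.
Proof.
have inj_row : injective (row_of ^~ y).
  by move=> c c' E; rewrite -(col_of_row_of c y) E col_of_row_of.
by rewrite [RHS](reindex_inj inj_row).
Qed.

(* The block pi_c(w) of L(w) occupies positions c m + 1, ..., c m + m, and its
   occurrences of y are the occurrences of row_of c y in w. *)
Lemma Lword_ps w j y : ps 1 j y (Lword L w) =
  \sum_(c < b) \sum_(i < j.+1) 'C(j, i) * (c * size w) ^ (j - i) * ps 1 i (row_of c y) w.
Proof.
rewrite /Lword (@ps_flatten _ _ _ _ (size w)); last first.
  by move=> u /mapP[c _ ->]; rewrite size_map.
rewrite size_map size_enum_ord big_mkord; apply: eq_bigr => c _.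
rewrite (nth_map c) ?size_enum_ord // nth_ord_enum -ps_shift.
by apply: ps_map_preim => x; rewrite row_ofE.
Qed.

End LatinSquare.

Section LwordMoments.
Variables (b : nat) (L : 'M['I_b]_b).
Hypothesis HL : latin L.

Definition balanced_below (k : nat) (w : seq 'I_b) : Prop :=
  forall i, i < k -> forall x x' : 'I_b, ps 1 i x w = ps 1 i x' w.

Definition column_weight (P : 'I_b -> nat) (y : 'I_b) : nat :=
  \sum_(c < b) c * P (row_of L c y).

(* The part of the expansion of Lword_ps involving only power sums of w of
   order i < k. *)
Definition lower_terms (w : seq 'I_b) (j k : nat) (y : 'I_b) : nat :=
  \sum_(c < b) \sum_(i < k) 'C(j, i) * (c * size w) ^ (j - i) * ps 1 i (row_of L c y) w.

Lemma regular_balanced (r : int) w k :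
  regular r w -> (k%:Z <= r + 1)%R -> balanced_below k w.
Proof. by move=> Hr Hk i Hi; apply: Hr; lia. Qed.

Lemma Lword_ps_top w j y :
  ps 1 j y (Lword L w) = lower_terms w j j y + \sum_x ps 1 j x w.
Proof.
rewrite (Lword_ps HL) /lower_terms -(sum_row_of HL _ y (ps 1 j ^~ w)) -big_split.
by apply: eq_bigr => c _; rewrite big_ord_recr /= binn subnn expn0 !mul1n.
Qed.

Lemma lower_terms_balanced w j k y y' :
  balanced_below k w -> lower_terms w j k y = lower_terms w j k y'.
Proof.
move=> Hw; apply: eq_bigr => c _; apply: eq_bigr => i _.
by rewrite (Hw i (ltn_ord i) _ (row_of L c y')).
Qed.

Lemma Lword_balanced w j y y' :
  balanced_below j w -> ps 1 j y (Lword L w) = ps 1 j y' (Lword L w).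
Proof. by move=> Hw; rewrite !Lword_ps_top (@lower_terms_balanced w j j y y' Hw). Qed.

Lemma lower_terms_last w k y :
  lower_terms w k.+1 k.+1 y =
  lower_terms w k.+1 k y + k.+1 * size w * column_weight (ps 1 k ^~ w) y.
Proof.
rewrite /lower_terms /column_weight big_distrr -big_split /=.
by apply: eq_bigr => c _; rewrite big_ord_recr /= binSn subSnn expn1; congr (_ + _); ring.
Qed.

Lemma Lword_ps_succ w k y y' : 0 < size w -> balanced_below k w ->
  ps 1 k.+1 y (Lword L w) = ps 1 k.+1 y' (Lword L w) <->
  column_weight (ps 1 k ^~ w) y = column_weight (ps 1 k ^~ w) y'.
Proof.
move=> Hm Hw.
rewrite !Lword_ps_top !lower_terms_last (@lower_terms_balanced w k.+1 k y y' Hw).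
split=> [/addIn/addnI/eqP|->] //.
by rewrite eqn_pmul2l ?muln_gt0 // => /eqP.
Qed.

End LwordMoments.

Local Open Scope ring_scope.

Definition constant_col (F : Type) n (u : 'cV[F]_n) : Prop := forall i j, u i 0 = u j 0.

Lemma constant_colE (F : pzRingType) n (u : 'cV[F]_n) i :
  constant_col u -> u = u i 0 *: const_mx 1.
Proof. by move=> Hu; apply/matrixP => j k; rewrite ord1 !mxE mulr1 (Hu j i). Qed.

Section ConstantRowSums.
Variables (F : fieldType) (n : nat) (A : 'M[F]_n) (s : F).
Hypothesis s_neq0 : s != 0.
Hypothesis row_sums : A *m const_mx 1 = s *: (const_mx 1 : 'cV[F]_n).

Lemma unitmx_constant_preimage (u : 'cV[F]_n) :
  A \in unitmx -> constant_col (A *m u) -> constant_col u.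
Proof.
case: n A u row_sums => [|n'] A' u A1 HU Hu i; first by case.
have -> : u = ((A' *m u) 0 0 / s) *: const_mx 1.
  apply: (can_inj (mulKmx HU)).
  by rewrite {1}(constant_colE 0 Hu) -scalemxAr A1 scalerA divfK.
by move=> j; rewrite !mxE.
Qed.

Lemma constant_kernel (u : 'cV[F]_n) : A *m u = 0 -> constant_col u -> u = 0.
Proof.
case: n A u row_sums => [|n'] A' u A1 Au Hu; first by apply/matrixP => [[]].
move: Au; rewrite (constant_colE 0 Hu) -scalemxAr A1 scalerA.
move/matrixP/(_ 0 0); rewrite !mxE mulr1 => /eqP; rewrite mulf_eq0 (negbTE s_neq0) orbF.
by move/eqP->; rewrite scale0r.
Qed.

End ConstantRowSums.

Lemma nonunit_kernel (F : fieldType) n (A : 'M[F]_n) :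
  A \notin unitmx -> exists2 u : 'cV[F]_n, u != 0 & A *m u = 0.
Proof.
rewrite unitmxE unitfE negbK -det_tr => /det0P[v v0 Hv].
by exists v^T; rewrite ?trmx_eq0 // -[A]trmxK -trmx_mul Hv trmx0.
Qed.

Lemma common_denominator (T : finType) (v : T -> rat) :
  exists2 D : int, D != 0 & exists z : T -> int, forall x, D%:~R * v x = (z x)%:~R.
Proof.
exists (\prod_x denq (v x)).
  by rewrite lt0r_neq0 // prodr_gt0 // => x _; exact: denq_gt0.
exists (fun x => numq (v x) * \prod_(x' | x' != x) denq (v x')) => x.
by rewrite (bigD1 x) //= !intrM numqE; ring.
Qed.

Lemma shift_positive (T : finType) (z : T -> int) :
  exists K : int, exists n : T -> nat, forall x, (0 < n x)%N /\ (n x)%:Z = z x + K.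
Proof.
pose K : nat := (\sum_x absz (z x)).+1.
exists K%:Z, (fun x => absz (z x + K%:Z)) => x.
have : (absz (z x) <= \sum_x absz (z x))%N by rewrite (bigD1 x) //= leq_addr.
lia.
Qed.

Section EncodingMatrix.
Variables (b : nat) (L : 'M['I_b]_b).
Hypothesis HL : latin L.

Local Notation M := (encoding L).
Local Notation ones := (const_mx 1 : 'cV[rat]_b).
Local Notation colv P := (\col_x ((P x)%:R : rat)).

Lemma encodingE y x : M y x = (col_of L x y).+1%:R.
Proof.
rewrite /encoding mxE /col_of; case: pickP => [c //|none].
by have := none (col_of L x y); rewrite col_ofE // eqxx.
Qed.

(* (M P)_y = column_weight P y + \sum_x P x, since M_{y,x} - 1 is the column
   in which row x contains y. *)
Lemma encoding_mul_col (P : 'I_b -> nat) y :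
  (M *m colv P) y 0 = (column_weight L P y + \sum_x P x)%N%:R.
Proof.
rewrite mxE -(sum_row_of HL _ y (fun x => M y x * colv P x 0)).
rewrite /column_weight -(sum_row_of HL _ y P) -big_split natr_sum.
by apply: eq_bigr => c _; rewrite encodingE col_of_row_of // mxE -natrM mulSn addnC.
Qed.

(* Every row of M is a permutation of 1, ..., b. *)
Lemma encoding_row_sums : M *m ones = (\sum_(c < b) c.+1)%N%:R *: ones.
Proof.
have -> : ones = colv (fun _ => 1%N) by apply/matrixP => i j; rewrite !mxE.
apply/matrixP => y j; rewrite ord1 encoding_mul_col !mxE mulr1 /column_weight.
by rewrite -big_split; congr (_ %:R); apply: eq_bigr => c _; rewrite /= muln1 addn1.
Qed.

Lemma encoding_row_sum_neq0 : (0 < b)%N -> (\sum_(c < b) c.+1)%N%:R != 0 :> rat.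
Proof. by case: b => // b' _; rewrite pnatr_eq0 big_ord_recl. Qed.

Lemma encoding_constant_col (P : 'I_b -> nat) :
  constant_col (M *m colv P) <-> forall y y', column_weight L P y = column_weight L P y'.
Proof.
split=> H y y'; last by rewrite !encoding_mul_col (H y y').
by apply/eqP; rewrite -(eqn_add2r (\sum_x P x)) -(eqr_nat rat) -!encoding_mul_col (H y y').
Qed.

End EncodingMatrix.

Section MainParts.
Variables (b : nat) (L : 'M['I_b]_b).
Hypothesis HL : latin L.

Local Notation ones := (const_mx 1 : 'cV[rat]_b).

Lemma Lword_regular (r : int) w : regular r w -> regular (r + 1) (Lword L w).
Proof. by move=> Hr j Hj y y'; apply: (Lword_balanced HL); exact: regular_balanced Hr Hj. Qed.

(* By induction
   on k: once w is balanced below k, balance of the (k+1)-th power sums of L(w)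
   says that M maps the vector of k-th power sums of w to a constant vector. *)
Lemma regular_of_Lword_regular (r : int) w : encoding L \in unitmx ->
  (0 < size w)%N -> regular (r + 1) (Lword L w) -> regular r w.
Proof.
move=> HU Hm HR k; elim/ltn_ind: k => k IH Hk x x'.
have b0 : (0 < b)%N by apply: leq_ltn_trans (ltn_ord x).
have Hbal : balanced_below k w by move=> i Hi; apply: IH => //; lia.
have Hweight y y' : column_weight L (ps 1 k ^~ w) y = column_weight L (ps 1 k ^~ w) y'.
  by apply/(Lword_ps_succ HL y y' Hm Hbal)/HR; lia.
have := unitmx_constant_preimage (encoding_row_sum_neq0 b0) (encoding_row_sums HL) HU
  ((encoding_constant_col HL _).2 Hweight) x x'.
by rewrite !mxE => /eqP; rewrite eqr_nat => /eqP.
Qed.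

(* Part (3): for singular M, a kernel vector u of M, scaled and shifted into
   positive integers n, gives a word w' with n x occurrences of each x.  Then M
   maps the counts of w' to a constant vector, so L(w') is 1-regular, while w'
   is not 0-regular since u is not constant. *)
Lemma nonregular_preimage : (0 < b)%N -> encoding L \notin unitmx ->
  exists w' : seq 'I_b, (0 < size w')%N /\ regular 1 (Lword L w') /\ ~ regular 0 w'.
Proof.
move=> b0 HU.
have [u u0 Mu] := nonunit_kernel HU.
have [D D0 [z Dz]] := common_denominator (fun x => u x 0).
have [K [n Hn]] := shift_positive z.
pose w' := word_of_counts n.
have Hcnt x : ps 1 0 x w' = n x by rewrite ps0_count count_word_of_counts.
have HnR x : (n x)%:R = D%:~R * u x 0 + K%:~R :> rat.
  by rewrite Dz -intrD -(Hn x).2.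
have Hcol : \col_x ((ps 1 0 x w')%:R : rat) = D%:~R *: u + K%:~R *: ones.
  by apply/matrixP => x j; rewrite ord1 !mxE Hcnt HnR mulr1.
have Mconst : constant_col (encoding L *m \col_x ((ps 1 0 x w')%:R : rat)).
  by move=> i j; rewrite Hcol mulmxDr -!scalemxAr Mu (encoding_row_sums HL) scaler0 add0r !mxE.
have Hweight := (encoding_constant_col HL _).1 Mconst.
have Hm : (0 < size w')%N.
  by apply: leq_trans (count_size (pred1 (Ordinal b0)) w'); rewrite -(ps0_count 1) Hcnt (Hn _).1.
exists w'; split; [exact: Hm | split].
- have bal0 : balanced_below 0 w' by [].
  move=> [|[|j]] Hj y y' //; first exact: Lword_balanced.
  by apply/(Lword_ps_succ HL y y' Hm bal0).2; exact: Hweight.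
- move=> Hreg; apply/(negP u0)/eqP.
  apply: (constant_kernel (encoding_row_sum_neq0 b0) (encoding_row_sums HL) Mu) => i j.
  have := Hreg 0%N (lexx _) i j; rewrite /psum -/(ps 1 0 i w') -/(ps 1 0 j w') !Hcnt.
  move/(congr1 (fun k => k%:R : rat)); rewrite !HnR => /addIr/mulfI; apply.
  by rewrite intr_eq0.
Qed.

End MainParts.

Theorem mainTheorem2 (b : nat) (L : 'M['I_b]_b) :
  (0 < b)%N -> latin L -> normalized L ->
  (forall (w : seq 'I_b) (r : int), (0 < size w)%N -> (-1 <= r)%R ->
     (regular r w -> regular (r + 1) (Lword L w)) /\
     (encoding L \in unitmx -> regular (r + 1) (Lword L w) -> regular r w)) /\
  (encoding L \notin unitmx ->
     exists w' : seq 'I_b, (0 < size w')%N /\ regular 1 (Lword L w') /\ ~ regular 0 w').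
Proof.
move=> b0 HL _; split; last exact: nonregular_preimage.
move=> w r Hm _; split; first exact: Lword_regular.
by move=> HU; apply: regular_of_Lword_regular.
Qed.
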